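(* Let $k$ be an algebraically closed field of characteristic $0$, $d\ge3$, $n\ge2$, and let $V_n$ have basis $v_1,\dots,v_n$ with symmetric $d$-linear form $\Theta_d(v_{i_1},\dots,v_{i_d})=1$ if $i_1+\dots+i_d=(d-1)n+1$ and $0$ otherwise. Let $\mathrm{Cent}_k(n,d)=\{f\in\mathrm{End}_k(V_n):\Theta_d(fu_1,u_2,\dots,u_d)=\Theta_d(u_1,fu_2,\dots,u_d)\ \forall u_i\}$ and $\mathcal{L}(n,d)=\{L\in\mathfrak{gl}(V_n):\sum_{i=1}^d\Theta_d(u_1,\dots,L(u_i),\dots,u_d)=0\ \forall u_j\}$. Then $\dim_k\mathcal{L}(n,d)<\dim_k\mathrm{Cent}_k(n,d)=n$. *)

From HB Require Import structures.
From mathcomp Require Import all_boot all_order all_algebra.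
Set Implicit Arguments. Unset Strict Implicit. Unset Printing Implicit Defensive.
Import GRing.Theory.
Local Open Scope ring_scope.

(* V_n = 'cV[k]_n, basis vector v_{i+1} = delta at index i : 'I_n (0-based).
   Theta_d (u_1,...,u_d), the u's given as a family u : 'I_d -> 'cV_n, is the
   multilinear extension of Theta_d(v_{i_1},...,v_{i_d}) = [i_1+...+i_d == (d-1)n+1]
   (1-based indices), written out in coordinates. *)
Definition Theta (k : fieldType) (n d : nat) (u : 'I_d -> 'cV[k]_n) : k :=
  \sum_(i : {ffun 'I_d -> 'I_n} | ((\sum_(j < d) (i j).+1)%N == (d - 1) * n + 1)%N)
     \prod_(j < d) u j (i j) ord0.

Definition app_at (k : fieldType) (n d : nat) (f : 'M[k]_n) (p : nat)
    (u : 'I_d -> 'cV[k]_n) : 'I_d -> 'cV[k]_n :=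
  fun j => if val j == p then f *m u j else u j.

Definition in_Cent (k : fieldType) (n d : nat) (f : 'M[k]_n) : Prop :=
  forall u : 'I_d -> 'cV[k]_n, Theta (app_at f 0 u) = Theta (app_at f 1 u).

Definition in_Lie (k : fieldType) (n d : nat) (f : 'M[k]_n) : Prop :=
  forall u : 'I_d -> 'cV[k]_n, \sum_(i < d) Theta (app_at f i u) = 0.

From HB Require Import structures.
From mathcomp Require Import all_boot all_order all_algebra.
From mathcomp Require Import zify ring.
Set Implicit Arguments. Unset Strict Implicit. Unset Printing Implicit Defensive.
Import GRing.Theory.
Local Open Scope ring_scope.

(* Index the basis from 0 and let S = (d-1)(n-1).  Theta(v_(a_1), ..., v_(a_d)) = 1 exactly
   when a_1 + ... + a_d = S, so replacing the p-th argument by f v_(a_p) produces the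
   entry of f in column a_p on the diagonal row - column = S - (a_1 + ... + a_d).  Hence
   both defining conditions become linear relations among the entries of a single diagonal
   of f, and the argument only needs the tuples (x, y, z, n-1, ..., n-1).
   For Cent_k(n,d) this forces f to be an upper triangular Toeplitz matrix, i.e. a
   polynomial in the nilpotent shift, and conversely; these form a space of dimension n.
   For L(n,d), the relations say that each diagonal is odd under reflection and is an
   arithmetic progression; using the zeros outside the matrix and characteristic 0,
   every subdiagonal vanishes, every other diagonal vanishes once its entry in the first
   row does, and the last entry of the first row vanishes outright.  So L(n,d) embeds into k^(n-1) by the first n-1
   entries of the first row. *)

Section ThetaCoefficients.
Variables (k : fieldType) (n d : nat).
Implicit Types (f : 'M[k]_n) (p : 'I_d) (a : {ffun 'I_d -> 'I_n}).

Definition idx_set a p (c : 'I_n) : {ffun 'I_d -> 'I_n} :=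
  [ffun j => if j == p then c else a j].

Lemma idx_set_at a p c : idx_set a p c p = c.
Proof. by rewrite ffunE eqxx. Qed.

Lemma idx_setK a p c : idx_set (idx_set a p c) p (a p) = a.
Proof. by apply/ffunP => j; rewrite !ffunE; case: eqP => // ->. Qed.

Definition Theta_support a : bool :=
  ((\sum_(j < d) (a j).+1)%N == (d - 1) * n + 1)%N.

Definition Theta_coef f p a : k :=
  \sum_(c < n) (Theta_support (idx_set a p c))%:R * f c (a p).

(* Expand [f *m u p] and reindex by the involution [(a, c) |-> (a[p := c], a p)]. *)
Lemma Theta_app_at f p (u : 'I_d -> 'cV[k]_n) :
  Theta (app_at f p u) = \sum_a Theta_coef f p a * \prod_j u j (a j) ord0.
Proof.
pose rest a := \prod_(j | j != p) u j (a j) ord0.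
have rest_set a c : rest (idx_set a p c) = rest a.
  by apply: eq_bigr => j /negbTE jp; rewrite ffunE jp.
pose F (ac : {ffun 'I_d -> 'I_n} * 'I_n) :=
  (Theta_support ac.1)%:R * f (ac.1 p) ac.2 * u p ac.2 ord0 * rest ac.1.
pose swap (ac : {ffun 'I_d -> 'I_n} * 'I_n) := (idx_set ac.1 p ac.2, ac.1 p).
have swapK : involutive swap by case=> a c; rewrite /swap /= idx_setK idx_set_at.
transitivity (\sum_a \sum_c F (a, c)).
  rewrite /Theta big_mkcond /=; apply: eq_bigr => a _; rewrite /F /Theta_support /=.
  case: ifP => _; last by rewrite big1 // => c _; rewrite !mul0r.
  rewrite (bigD1 p) //= /app_at eqxx mxE big_distrl /=; apply: eq_bigr => c _.
  rewrite mul1r (_ : \prod_(j | j != p) _ = rest a) //.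
  by apply: eq_bigr => j jp; rewrite (inj_eq val_inj) (negbTE jp).
have -> : \sum_a \sum_c F (a, c) = \sum_a \sum_c F (swap (a, c)).
  by rewrite !pair_bigA (reindex_inj (inv_inj swapK)); apply: eq_bigr => -[a c].
apply: eq_bigr => a _; rewrite big_distrl (bigD1 p) //=; apply: eq_bigr => c _.
by rewrite /F /swap /= idx_set_at rest_set /rest !mulrA.
Qed.

Definition basis_family a : 'I_d -> 'cV[k]_n := fun j => delta_mx (a j) ord0.

Lemma Theta_app_at_basis f p a :
  Theta (app_at f p (basis_family a)) = Theta_coef f p a.
Proof.
rewrite Theta_app_at (bigD1 a) //= big1 ?mulr1 => [|j _]; last by rewrite mxE !eqxx.
rewrite big1 ?addr0 // => b ba.
have [j bja] : exists j, b j != a j.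
  apply/existsP; rewrite -negb_forall; apply: contra ba => /forallP ab.
  by apply/eqP/ffunP => j; apply/eqP.
by rewrite (bigD1 j) //= mxE (negbTE bja) mul0r mulr0.
Qed.

Lemma in_CentE f p0 p1 : p0 = 0 :> nat -> p1 = 1 :> nat ->
  in_Cent d f <-> forall a, Theta_coef f p0 a = Theta_coef f p1 a.
Proof.
move=> p0E p1E; rewrite /in_Cent.
have -> : app_at f 0 = app_at f p0 by rewrite p0E.
have -> : app_at f 1 = app_at f p1 by rewrite p1E.
split=> [Cf a | Cf u]; first by rewrite -!Theta_app_at_basis.
by rewrite !Theta_app_at; apply: eq_bigr => a _; rewrite Cf.
Qed.

Lemma in_LieE f : in_Lie d f <-> forall a, \sum_p Theta_coef f p a = 0.
Proof.
rewrite /in_Lie; split=> [Lf a | Lf u].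
  by have := Lf (basis_family a); under eq_bigr do rewrite Theta_app_at_basis.
under eq_bigr do rewrite Theta_app_at.
by rewrite exchange_big big1 // => a _; rewrite -mulr_suml Lf mul0r.
Qed.

End ThetaCoefficients.

Section ThetaCoefficientValues.
Variables (k : fieldType) (N1 d : nat).
Hypothesis d_gt0 : (0 < d)%N.
Implicit Types (f : 'M[k]_N1.+1) (p : 'I_d) (a : {ffun 'I_d -> 'I_N1.+1}).
Local Notation S := (d.-1 * N1)%N.

Definition idx_sum a : nat := \sum_j a j.

Lemma Theta_supportE a : Theta_support a = (idx_sum a == S).
Proof.
rewrite /Theta_support /idx_sum.
rewrite (eq_bigr (fun j => a j + 1)%N) => [|j _]; last by rewrite addn1.
rewrite big_split /= sum_nat_const card_ord muln1.
by rewrite -subn1; apply/eqP/eqP; lia.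
Qed.

Lemma idx_sum_set a p c : (idx_sum (idx_set a p c) + a p = idx_sum a + c)%N.
Proof.
rewrite /idx_sum (bigD1 p) //= [in RHS](bigD1 p) //= idx_set_at.
rewrite [X in (_ + X + _)%N](eq_bigr (fun j => a j : nat)) => [|j /negbTE jp].
  by rewrite addnAC [RHS]addnAC [(c + _)%N]addnC.
by rewrite ffunE jp.
Qed.

Lemma idx_sum_le a p : (idx_sum a <= S + a p)%N.
Proof.
rewrite /idx_sum (bigD1 p) //= addnC leq_add2r.
apply: (@leq_trans (\sum_(j < d | j != p) N1)).
  by apply: leq_sum => j _; apply: leq_ord.
by rewrite sum_nat_const cardC1 card_ord mulnC.
Qed.

Definition ent f (r c : nat) : k :=
  if ((r <= N1) && (c <= N1))%N then f (inord r) (inord c) else 0.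

Lemma ent_ord f (i j : 'I_N1.+1) : ent f i j = f i j.
Proof. by rewrite /ent !leq_ord !inord_val. Qed.

Lemma ent_out f r c : (N1 < r)%N || (N1 < c)%N -> ent f r c = 0.
Proof. by rewrite /ent => /orP[] /ltn_geF ->; rewrite ?andbF. Qed.

Lemma Theta_coefE f p a : Theta_coef f p a = ent f (S + a p - idx_sum a)%N (a p).
Proof.
set r := (S + a p - idx_sum a)%N; have sum_le := idx_sum_le a p.
have suppE c : Theta_support (idx_set a p c) = (c == r :> nat).
  by rewrite Theta_supportE //; apply/eqP/eqP; have := idx_sum_set a p c; lia.
rewrite /Theta_coef; under eq_bigr do rewrite suppE.
have [r_le | r_gt] := leqP r N1; last first.
  rewrite ent_out ?r_gt // big1 // => c _.
  by rewrite (_ : (c == r :> nat) = false) ?mul0r //; apply/eqP; have := ltn_ord c; lia.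
rewrite (bigD1 (inord r)) /= ?inordK // eqxx mul1r big1 ?addr0 => [|c cr].
  by rewrite -ent_ord inordK.
rewrite (_ : (c == r :> nat) = false) ?mul0r //.
by apply: contraNF cr => /eqP <-; rewrite inord_val.
Qed.

End ThetaCoefficientValues.

Section PaddedTuples.
Variables (k : fieldType) (N1 d' : nat).
Local Notation d := d'.+3.
Local Notation S := (d'.+2 * N1)%N.
Implicit Types (f : 'M[k]_N1.+1) (x y z σ : nat).

Definition pad3 x y z : {ffun 'I_d -> 'I_N1.+1} :=
  [ffun j : 'I_d => inord (nth N1 [:: x; y; z] j)].

Lemma pad3E x y z (j : 'I_d) : (x <= N1)%N -> (y <= N1)%N -> (z <= N1)%N ->
  pad3 x y z j = nth N1 [:: x; y; z] j :> nat.
Proof.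
move=> x_le y_le z_le; rewrite ffunE inordK // ltnS.
by case: j => -[|[|[|m]]] _ //=; rewrite nth_nil.
Qed.

Lemma idx_sum_pad3 x y z : (x <= N1)%N -> (y <= N1)%N -> (z <= N1)%N ->
  idx_sum (pad3 x y z) = (x + y + z + d' * N1)%N.
Proof.
move=> x_le y_le z_le; rewrite /idx_sum !big_ord_recl !pad3E //=.
rewrite (eq_bigr (fun=> N1)) => [|i _]; last by rewrite pad3E //= nth_nil.
by rewrite sum_nat_const card_ord !addnA mulnC.
Qed.

Lemma Lie_pad3 f : in_Lie d f -> forall σ x y z,
  (x <= N1)%N -> (y <= N1)%N -> (z <= N1)%N -> (x + y + z + d' * N1 = σ)%N ->
  ent f (S + x - σ) x + ent f (S + y - σ) y + ent f (S + z - σ) z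
    + ent f (S + N1 - σ) N1 *+ d' = 0.
Proof.
move=> /in_LieE Lf σ x y z x_le y_le z_le sumE; have := Lf (pad3 x y z).
rewrite !big_ord_recl !Theta_coefE // idx_sum_pad3 // sumE !pad3E //=.
rewrite (eq_bigr (fun=> ent f (S + N1 - σ) N1)) => [|i _].
  by rewrite sumr_const card_ord !addrA.
by rewrite Theta_coefE // idx_sum_pad3 // sumE pad3E //= nth_nil.
Qed.

Lemma in_Cent01E f :
  in_Cent d f <-> forall a, Theta_coef f ord0 a = Theta_coef f (inord 1 : 'I_d) a.
Proof. by apply: in_CentE; rewrite ?inordK. Qed.

Lemma Cent_pad3 f : in_Cent d f -> forall σ x y z,
  (x <= N1)%N -> (y <= N1)%N -> (z <= N1)%N -> (x + y + z + d' * N1 = σ)%N ->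
  ent f (S + x - σ) x = ent f (S + y - σ) y.
Proof.
move=> /in_Cent01E Cf σ x y z x_le y_le z_le sumE; have := Cf (pad3 x y z).
by rewrite !Theta_coefE // idx_sum_pad3 // sumE !pad3E // inordK.
Qed.

End PaddedTuples.

Lemma pchar0_mulrn_eq0 (R : idomainType) (x : R) m : [pchar R] =i pred0 ->
  (x *+ m == 0) = (m == 0)%N || (x == 0).
Proof. by move=> R0; rewrite -mulr_natr mulf_eq0 (pcharf0P R).1 // orbC. Qed.

Lemma arith_progression (V : zmodType) (h : nat -> V) (c : V) N :
  (forall e, (e < N)%N -> h e.+1 = h e - c) ->
  forall e, (e <= N)%N -> h e = h 0%N - c *+ e.
Proof.
move=> step; elim=> [|e IH] e_le; first by rewrite mulr0n subr0.
by rewrite step // IH 1?ltnW // mulrSr opprD addrA.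
Qed.

Section LieDiagonals.
Variables (k : fieldType) (N1 d' : nat) (f : 'M[k]_N1.+1).
Hypotheses (k_char0 : [pchar k] =i pred0) (f_Lie : in_Lie d'.+3 f).
Local Notation S := (d'.+2 * N1)%N.

Let mulrn_eq0 (x : k) m : (0 < m)%N -> x *+ m = 0 -> x = 0.
Proof. by move=> m_gt0 /eqP; rewrite pchar0_mulrn_eq0 // eqn0Ngt m_gt0 => /eqP. Qed.

(* On the M-th subdiagonal h (of length N + 1), the tuples (x, N - x, N1) and
   (x + 1, N - x, N1 - 1) give h (N - x) = - h x and h (x + 1) = h x - h (N1 - 1);
   the progression must also reach h (N + 1) = 0, which leaves only h = 0. *)
Lemma Lie_lower_diag M e : (0 < M)%N -> ent f (e + M) e = 0.
Proof.
move=> M_gt0; have [M_gt | M_le] := ltnP N1 M; first by rewrite ent_out //; lia.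
set N := (N1 - M)%N; pose h i := ent f (i + M) i; pose c := h N1.-1.
have lie x y z : (x <= N1)%N -> (y <= N1)%N -> (z <= N1)%N ->
    (x + y + z + d' * N1 = S - M)%N -> h x + h y + h z + h N1 *+ d' = 0.
  have rowE w : (S + w - (S - M) = w + M)%N by lia.
  by move=> x_le y_le z_le sumE; have := Lie_pad3 f_Lie x_le y_le z_le sumE; rewrite !rowE.
have hN1 : h N1 = 0 by rewrite /h ent_out //; lia.
have refl x : (x <= N)%N -> h (N - x)%N = - h x.
  move=> x_le; apply/eqP; rewrite -addr_eq0 addrC.
  by rewrite -(lie x (N - x)%N N1) ?hN1 ?mul0rn ?addr0 //; lia.
have step x : (x < N.+1)%N -> h x.+1 = h x - c.
  move=> x_lt; apply/eqP; rewrite -subr_eq0 -(lie x.+1 (N - x)%N N1.-1) ?hN1; try lia.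
  by rewrite refl ?mul0rn ?addr0; [apply/eqP; rewrite opprB addrA addrAC | lia].
have hprog := arith_progression step.
have hNS : h N.+1 = 0 by rewrite /h ent_out //; lia.
have h0E : h 0%N = c *+ N.+1 by apply/eqP; rewrite -subr_eq0 -hNS (hprog N.+1).
have c0 : c = 0.
  apply: (@mulrn_eq0 _ N.+2) => //; have := refl 0%N (leq0n _).
  rewrite subn0 hprog // h0E => E.
  have -> : c *+ N.+2 = (c *+ N.+1 - c *+ N) - - (c *+ N.+1) by ring.
  by rewrite E subrr.
have h0 : h 0%N = 0 by rewrite h0E c0 mul0rn.
have [e_le | e_gt] := leqP e N.+1; first by rewrite -/(h e) hprog // h0 c0 mul0rn subr0.
by rewrite ent_out //; lia.
Qed.

(* Same argument on the m-th superdiagonal, now shifted by m, with its first entry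
   ent f 0 m as the boundary zero; the tuple (m, N1, N1) forces the last one to vanish. *)
Lemma Lie_upper_diag m e : ((m < N1)%N -> ent f 0 m = 0) -> ent f e (e + m) = 0.
Proof.
move=> row0; have [m_gt | m_le] := ltnP N1 m; first by rewrite ent_out //; lia.
set N := (N1 - m)%N; pose h i := ent f i (i + m).
have lie x y z : (x <= N)%N -> (y <= N)%N -> (z <= N)%N -> (x + y + z = N + N)%N ->
    h x + h y + h z + h N *+ d' = 0.
  move=> x_le y_le z_le sumE.
  have := Lie_pad3 f_Lie (σ := S + m) (x := x + m) (y := y + m) (z := z + m).
  have rowE w : (S + (w + m) - (S + m) = w)%N by lia.
  rewrite !rowE (_ : ent f (S + N1 - (S + m)) N1 = h N); last by rewrite /h; congr ent; lia.
  by move=> H; apply: H; lia.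
have top : h 0%N + h N *+ d'.+2 = 0.
  by rewrite -(lie 0%N N N) // ?add0n // !mulrS !addrA.
have [N0 | N_gt0] := posnP N.
  have h0 : h 0%N = 0 by apply: (@mulrn_eq0 _ d'.+3) => //; rewrite mulrS -{2}N0.
  by case: e => [|e]; [exact: h0 | rewrite ent_out //; lia].
have h0 : h 0%N = 0 by rewrite /h add0n; apply: row0; lia.
have hN : h N = 0 by apply: (@mulrn_eq0 _ d'.+2) => //; rewrite -top h0 add0r.
have refl x : (x <= N)%N -> h (N - x)%N = - h x.
  move=> x_le; apply/eqP; rewrite -addr_eq0 addrC.
  by rewrite -(lie x (N - x)%N N) ?hN ?mul0rn ?addr0 //; lia.
pose c := h N.-1.
have step x : (x < N)%N -> h x.+1 = h x - c.
  move=> x_lt; apply/eqP; rewrite -subr_eq0 -(lie x.+1 (N - x)%N N.-1) ?hN; try lia.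
  by rewrite refl ?mul0rn ?addr0; [apply/eqP; rewrite opprB addrA addrAC | lia].
have hprog := arith_progression step.
have c0 : c = 0.
  apply: (@mulrn_eq0 _ N) => //; apply/eqP; rewrite -oppr_eq0 -sub0r -{1}h0 -hprog //.
  by rewrite hN.
have [e_le | e_gt] := leqP e N; first by rewrite -/(h e) hprog // h0 c0 mul0rn subr0.
by rewrite ent_out //; lia.
Qed.

Lemma Lie_eq0_first_row : (forall m, (m < N1)%N -> ent f 0 m = 0) -> f = 0.
Proof.
move=> row0; apply/matrixP => i j; rewrite mxE -ent_ord.
have [ij | ji] := leqP i j; first by rewrite -(subnKC ij); exact: Lie_upper_diag (row0 _).
by rewrite -(subnKC (ltnW ji)) Lie_lower_diag // subn_gt0.
Qed.

End LieDiagonals.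

Section CentToeplitz.
Variables (k : fieldType) (N1 d' : nat).
Local Notation S := (d'.+2 * N1)%N.
Implicit Types (f : 'M[k]_N1.+1).

Definition upper_toeplitz f :=
  forall b x, (x <= N1)%N -> ent f b x = if (b <= x)%N then ent f 0 (x - b) else 0.

Lemma Cent_upper_toeplitz f : in_Cent d'.+3 f -> upper_toeplitz f.
Proof.
move=> Cf.
have shift b x : (b <= N1)%N -> (x <= N1)%N -> ent f b x = ent f (N1 + b - x) N1.
  move=> b_le x_le; have := Cent_pad3 Cf (σ := S + x - b) (x := x) (y := N1) (z := N1 - b).
  rewrite (_ : S + x - (S + x - b) = b)%N; last by lia.
  by rewrite (_ : S + N1 - (S + x - b) = N1 + b - x)%N; [apply; lia | lia].
move=> b x x_le; have [b_gt | b_le] := ltnP N1 b.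
  by rewrite ent_out ?ifN //; lia.
rewrite shift //; case: leqP => [bx | xb]; last by rewrite ent_out //; lia.
by rewrite (shift 0%N) //; [congr ent; lia | lia].
Qed.

Lemma upper_toeplitz_Theta_coef f p (a : {ffun 'I_d'.+3 -> 'I_N1.+1}) :
  upper_toeplitz f ->
  Theta_coef f p a = if (S <= idx_sum a)%N then ent f 0 (idx_sum a - S) else 0.
Proof.
move=> Tf; have := idx_sum_le a p; rewrite Theta_coefE // Tf ?leq_ord //= => sum_le.
have -> : (S + a p - idx_sum a <= a p)%N = (S <= idx_sum a)%N by apply/idP/idP; lia.
by case: ifP => // S_le; congr ent; lia.
Qed.

Lemma upper_toeplitz_Cent f : upper_toeplitz f -> in_Cent d'.+3 f.
Proof. by move=> Tf; apply/in_Cent01E => a; rewrite !upper_toeplitz_Theta_coef. Qed.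

Definition superdiag_mx (j : 'I_N1.+1) : 'M[k]_N1.+1 :=
  \matrix_(b, x) ((x == b + j :> nat)%N)%:R.

Definition superdiag_basis : N1.+1.-tuple 'M[k]_N1.+1 :=
  [tuple superdiag_mx j | j < N1.+1].

Lemma superdiag_basisE (j : 'I_N1.+1) : superdiag_basis`_j = superdiag_mx j.
Proof. by rewrite nth_mktuple. Qed.

Lemma sum_superdiag_mx (t : 'I_N1.+1 -> k) (b x : 'I_N1.+1) :
  (\sum_j t j *: superdiag_mx j) b x = if (b <= x)%N then t (inord (x - b)) else 0.
Proof.
have x_lt := ltn_ord x; rewrite summxE; under eq_bigr do rewrite !mxE.
case: leqP => [bx | xb]; last first.
  by rewrite big1 // => j _; rewrite (_ : (x == b + j :> nat)%N = false) ?mulr0 //; lia.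
rewrite (bigD1 (inord (x - b))) //= inordK; last lia.
rewrite (_ : (x == b + (x - b) :> nat)%N) ?mulr1; last by apply/eqP; lia.
rewrite big1 ?addr0 // => j ji; rewrite (_ : (x == b + j :> nat)%N = false) ?mulr0 //.
by apply: contraNF ji => /eqP xE; apply/eqP/val_inj; rewrite /= inordK; lia.
Qed.

Lemma ent_sum_superdiag (t : 'I_N1.+1 -> k) b x : (x <= N1)%N ->
  ent (\sum_j t j *: superdiag_mx j) b x = if (b <= x)%N then t (inord (x - b)) else 0.
Proof.
move=> x_le; have [b_gt | b_le] := ltnP N1 b; first by rewrite ent_out ?ifN //; lia.
by rewrite /ent b_le x_le sum_superdiag_mx !inordK.
Qed.

Lemma span_superdiag f : f \in <<superdiag_basis>>%VS <-> upper_toeplitz f.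
Proof.
split=> [/coord_span -> b x x_le | Tf].
  under eq_bigr do rewrite superdiag_basisE.
  by rewrite !ent_sum_superdiag ?subn0 //; lia.
have -> : f = \sum_(j < N1.+1) ent f 0 j *: superdiag_mx j.
  apply/matrixP => b x; rewrite -!ent_ord Tf ?ent_sum_superdiag ?leq_ord //.
  by case: leqP => // bx; rewrite inordK //; have := ltn_ord x; lia.
apply: memv_suml => j _; rewrite -superdiag_basisE memvZ // memv_span // mem_nth //.
by rewrite size_tuple.
Qed.

Lemma free_superdiag : free superdiag_basis.
Proof.
apply/freeP => t t0 j; have := congr1 (fun g : 'M[k]_N1.+1 => g 0 j) t0.
under eq_bigr do rewrite superdiag_basisE.
by rewrite sum_superdiag_mx mxE subn0 inord_val.
Qed.

Lemma dim_superdiag : \dim <<superdiag_basis>> = N1.+1.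
Proof. by have /eqP := free_superdiag; rewrite size_tuple. Qed.

End CentToeplitz.

Section LieResidual.
Variables (k : fieldType) (n d : nat).

Definition Lie_residual (f : 'M[k]_n) : 'rV[k]_#|{: {ffun 'I_d -> 'I_n}}| :=
  \row_j \sum_(p < d) Theta_coef f p (enum_val j).

Lemma Lie_residual_is_linear : linear Lie_residual.
Proof.
move=> a f g; apply/matrixP => i j; rewrite !mxE mulr_sumr -big_split /=.
apply: eq_bigr => p _; rewrite /Theta_coef mulr_sumr -big_split /=.
by apply: eq_bigr => c _; rewrite !mxE mulrDr mulrCA.
Qed.

HB.instance Definition _ := GRing.isLinear.Build k 'M[k]_n _ *:%R
  Lie_residual Lie_residual_is_linear.

Lemma memv_ker_Lie_residual f : f \in lker (linfun Lie_residual) <-> in_Lie d f.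
Proof.
rewrite memv_ker lfunE in_LieE; split=> [/eqP/matrixP L0 a | Lf].
  by have := L0 0 (enum_rank a); rewrite !mxE enum_rankK.
by apply/eqP/matrixP => i j; rewrite !mxE Lf.
Qed.

End LieResidual.

Theorem lemma3p6 (k : closedFieldType) (hchar : [pchar k] =i pred0)
    (n d : nat) (hd : (3 <= d)%N) (hn : (2 <= n)%N) :
  exists (C L : {vspace 'M[k]_n}),
    (forall f, f \in C <-> in_Cent d f) /\
    (forall f, f \in L <-> in_Lie d f) /\
    (\dim L < \dim C)%N /\ \dim C = n.
Proof.
case: n hn => [|N1] // _; case: d hd => [|[|[|d']]] // _.
exists <<@superdiag_basis k N1>>%VS, (lker (linfun (@Lie_residual k N1.+1 d'.+3))).
split.
  by move=> f; rewrite span_superdiag; split=> [/upper_toeplitz_Cent | /Cent_upper_toeplitz].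
split; first exact: memv_ker_Lie_residual.
rewrite dim_superdiag; split=> //.
pose row0 := linfun (mxsub (fun=> ord0) (widen_ord (leqnSn N1))
                      : 'M[k]_N1.+1 -> 'M_(1, N1)).
set L := lker _.
have L_row0 : (L :&: lker row0 = 0)%VS.
  apply/eqP; rewrite -subv0; apply/subvP => f.
  rewrite memv_cap memv_ker lfunE memv0 => /andP[/memv_ker_Lie_residual Lf /eqP f0].
  apply/eqP/(Lie_eq0_first_row hchar Lf) => m m_lt.
  have := congr1 (fun g : 'M_(1, N1) => g 0 (Ordinal m_lt)) f0.
  by rewrite !mxE -ent_ord.
rewrite -(limg_dim_eq L_row0); apply: leq_ltn_trans (dimvS (subvf _)) _.
by rewrite dimvf dim_matrix mul1r.
Qed.
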